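(* Let $G$ be a $2K_2$-free graph, let $a,b$ be adjacent vertices of $G$, and let $X$ be a minimal dominating set of $G$ with $a,b\in X$ and $|X|>\alpha(G)$. Let $N$ be the set of vertices not in $\{a,b\}$ adjacent to at least one of $a,b$ and let $Y=X\cap N$. Then $|Y|=1$ and the unique vertex of $Y$ is adjacent to both $a$ and $b$.
   Context: All graphs are finite, simple and undirected. $2K_2$-free means no induced subgraph isomorphic to the disjoint union of two edges. $\alpha(G)$ is the maximum size of an independent set of $G$. A dominating set is a vertex set $D$ such that every vertex outside $D$ has a neighbour in $D$; it is minimal if no proper subset is dominating. *)

From mathcomp Require Import all_boot.
Set Implicit Arguments. Unset Strict Implicit. Unset Printing Implicit Defensive.

Definition simple_graph (T : finType) (e : rel T) : Prop :=
  symmetric e /\ irreflexive e.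

Definition independent (T : finType) (e : rel T) (S : {set T}) : bool :=
  [forall x in S, forall y in S, ~~ e x y].

Definition alpha (T : finType) (e : rel T) : nat :=
  \max_(S : {set T} | independent e S) #|S|.

Definition dominating (T : finType) (e : rel T) (D : {set T}) : bool :=
  [forall x, (x \notin D) ==> [exists y in D, e x y]].

Definition minimal_dominating (T : finType) (e : rel T) (D : {set T}) : bool :=
  dominating e D && [forall D' : {set T}, (D' \proper D) ==> ~~ dominating e D'].

Definition twoK2_free (T : finType) (e : rel T) : Prop :=
  ~ exists x y u v : T,
      [/\ uniq [:: x; y; u; v], e x y, e u v &
          [&& ~~ e x u, ~~ e x v, ~~ e y u & ~~ e y v]].

From mathcomp Require Import all_boot.
Set Implicit Arguments. Unset Strict Implicit. Unset Printing Implicit Defensive.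

(* A vertex x of X with a neighbour in X has a private neighbour pn x outside
   X, adjacent to no other vertex of X.  If B meets every edge inside X and
   the private neighbours of B are pairwise non-adjacent, replacing B by them
   gives an independent set of size |X|.  So |X| > alpha forces two vertices
   u, v of B with adjacent private neighbours, and then, by 2K2-freeness,
   {u, v} meets every edge inside X.  Applied to B = {b} and to the set of
   all non-isolated vertices of X, and combined with the absence of induced
   4-cycles inside X (2K2-freeness again, on private neighbours), this leaves
   room for exactly one vertex of Y, adjacent to both a and b. *)

Section MinimalDominatingSet.

Variables (T : finType) (e : rel T) (X : {set T}).
Hypotheses (e_sym : symmetric e) (e_irr : irreflexive e).

Lemma adj_neq x y : e x y -> x != y.
Proof. by apply: contraTneq => ->; rewrite e_irr. Qed.

Definition nonisolated x := (x \in X) && [exists z in X, e x z].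

Definition private_nb x v :=
  [&& v \notin X, e x v & [forall z in X, e z v ==> (z == x)]].

Definition pn x := odflt x [pick v | private_nb x v].

Definition vertex_cover (C : {set T}) :=
  forall c d, c \in X -> d \in X -> e c d -> (c \in C) || (d \in C).

Lemma nonisolatedW x z : x \in X -> z \in X -> e x z -> nonisolated x.
Proof. by move=> xX zX exz; rewrite /nonisolated xX; apply/exists_inP; exists z. Qed.

Lemma vertex_cover2_nadj u v c d :
  vertex_cover [set u; v] -> uniq [:: c; d; u; v] ->
  c \in X -> d \in X -> ~~ e c d.
Proof.
move=> cover U cX dX; apply/negP=> /(cover _ _ cX dX).
move: U; rewrite /= !inE !negb_or -!andbA.
by case/and5P=> _ /negbTE-> /negbTE-> /negbTE-> /andP[/negbTE-> _].
Qed.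

Hypothesis X_mindom : minimal_dominating e X.

Lemma private_nb_exists x : nonisolated x -> exists v, private_nb x v.
Proof.
case/andP=> xX /exists_inP[z zX exz].
case/andP: X_mindom => /forallP X_dom /forallP X_min.
have := implyP (X_min (X :\ x)) (properD1 xX).
case/forallPn=> w; rewrite negb_imply => /andP[wXx /exists_inPn no_nb].
have wx : w != x.
  by apply: contraTneq (exz) => <-; apply: no_nb; rewrite in_setD1 zX eq_sym (adj_neq exz).
have wX : w \notin X by move: wXx; rewrite in_setD1 wx.
have [y yX ewy] := exists_inP (implyP (X_dom w) wX).
have yx : y = x.
  by apply/eqP; apply: contraTT ewy => yx; apply: no_nb; rewrite in_setD1 yx.
subst y; exists w; rewrite /private_nb wX e_sym ewy /=.
apply/forall_inP=> z' z'X; apply/implyP=> ez'w; apply: contraTT ez'w => z'x.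
by rewrite e_sym; apply: no_nb; rewrite in_setD1 z'x.
Qed.

Lemma pnP x : nonisolated x -> private_nb x (pn x).
Proof.
case/private_nb_exists=> v xv; rewrite /pn.
by case: pickP => [u //| /(_ v)]; rewrite xv.
Qed.

Lemma pn_notin x : nonisolated x -> pn x \notin X.
Proof. by case/pnP/and3P. Qed.

Lemma pn_adj x : nonisolated x -> e x (pn x).
Proof. by case/pnP/and3P. Qed.

Lemma pn_nadj x z : nonisolated x -> z \in X -> z != x -> ~~ e z (pn x).
Proof.
case/pnP/and3P=> _ _ /forall_inP only_x zX zx.
by apply: contraNN zx => /(implyP (only_x z zX)).
Qed.

Lemma pn_inj : {in nonisolated &, injective pn}.
Proof.
move=> x z xN zN pn_xz; apply/eqP; apply: contraTT (pn_adj zN) => xz.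
by rewrite -pn_xz; apply: pn_nadj; rewrite // 1?eq_sym // (andP zN).1.
Qed.

Lemma independent_pn_exchange (B : {set T}) :
  {subset B <= nonisolated} -> vertex_cover B ->
  {in B &, forall x z, x != z -> ~~ e (pn x) (pn z)} ->
  independent e ((X :\: B) :|: pn @: B).
Proof.
move=> B_ni B_cover pn_indep.
have rest_pn u z : u \in X :\: B -> z \in B -> ~~ e u (pn z).
  case/setDP=> uX uB zB; apply: pn_nadj (B_ni z zB) uX _.
  by apply: contraNneq uB => ->.
apply/forall_inP=> u uS; apply/forall_inP=> w wS.
case/setUP: uS => [uR | /imsetP[x xB ->]]; case/setUP: wS => [wR | /imsetP[z zB ->]].
- case/setDP: uR => uX uB; case/setDP: wR => wX wB.
  by apply/negP=> /(B_cover _ _ uX wX); rewrite (negbTE uB) (negbTE wB).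
- exact: rest_pn.
- by rewrite e_sym; apply: rest_pn.
- by have [->|xz] := eqVneq x z; [rewrite e_irr | apply: pn_indep].
Qed.

Lemma card_le_alpha (B : {set T}) :
  {subset B <= nonisolated} -> vertex_cover B ->
  {in B &, forall x z, x != z -> ~~ e (pn x) (pn z)} -> #|X| <= alpha e.
Proof.
move=> B_ni B_cover pn_indep.
have BX : B \subset X by apply/subsetP=> x /B_ni/andP[].
have disj : (X :\: B) :&: (pn @: B) = set0.
  apply/setP=> v; rewrite inE in_set0.
  apply/negP=> /andP[/setDP[vX _] /imsetP[x xB vE]].
  by rewrite vE (negbTE (pn_notin (B_ni x xB))) in vX.
have card_exchange : #|(X :\: B) :|: pn @: B| = #|X|.
  rewrite cardsU disj cards0 subn0 card_in_imset; last first.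
    by move=> x z /B_ni xN /B_ni zN; apply: pn_inj.
  by rewrite -(cardsID B X) (setIidPr BX) addnC.
rewrite -card_exchange; apply: leq_bigmax_cond.
exact: independent_pn_exchange.
Qed.

Hypothesis e_free : twoK2_free e.

Lemma no_induced_2K2 x y u v :
  e x y -> e u v -> ~~ e x u -> ~~ e x v -> ~~ e y u -> ~~ e y v -> False.
Proof.
move=> exy euv nxu nxv nyu nyv; apply: e_free; exists x, y, u, v.
split=> //; last by rewrite nxu nxv nyu.
have xu : x != u by apply: contraNneq nxv => ->.
have xv : x != v by apply: contraNneq nxu => ->; rewrite e_sym.
have yu : y != u by apply: contraNneq nyv => ->.
have yv : y != v by apply: contraNneq nyu => ->; rewrite e_sym.
by rewrite /= !inE !negb_or (adj_neq exy) (adj_neq euv) xu xv yu yv.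
Qed.

Lemma pn_adj_of_nadj x z :
  nonisolated x -> nonisolated z -> x != z -> ~~ e x z -> e (pn x) (pn z).
Proof.
move=> xN zN xz nxz; apply/negPn/negP=> npp.
apply: (no_induced_2K2 (pn_adj xN) (pn_adj zN) nxz) => //.
- by apply: pn_nadj; rewrite ?(andP xN).1.
- by rewrite e_sym; apply: pn_nadj; rewrite 1?eq_sym ?(andP zN).1.
Qed.

Lemma vertex_cover_pn_adj x z :
  nonisolated x -> nonisolated z -> e (pn x) (pn z) -> vertex_cover [set x; z].
Proof.
move=> xN zN epp c d cX dX ecd; rewrite !inE.
apply/negPn/negP; rewrite !negb_or => /andP[/andP[cx cz] /andP[dx dz]].
by apply: (no_induced_2K2 ecd epp); apply: pn_nadj.
Qed.

Lemma vertex_cover_nadj x z :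
  nonisolated x -> nonisolated z -> x != z -> ~~ e x z -> vertex_cover [set x; z].
Proof. by move=> xN zN xz nxz; apply: vertex_cover_pn_adj (pn_adj_of_nadj _ _ _ _). Qed.

Lemma no_induced_C4 x1 x2 x3 x4 :
  x1 \in X -> x2 \in X -> x3 \in X -> x4 \in X ->
  e x1 x2 -> e x2 x3 -> e x3 x4 -> e x4 x1 ->
  x1 != x3 -> x2 != x4 -> ~~ e x1 x3 -> ~~ e x2 x4 -> False.
Proof.
move=> X1 X2 X3 X4 e12 e23 e34 e41 d13 d24 n13 n24.
have N1 := nonisolatedW X1 X2 e12; have N2 := nonisolatedW X2 X3 e23.
have N3 := nonisolatedW X3 X4 e34; have N4 := nonisolatedW X4 X1 e41.
have U : uniq [:: x1; x2; x3; x4].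
  rewrite /= !inE !negb_or (adj_neq e12) (adj_neq e23) (adj_neq e34) d13 d24.
  by rewrite [x1 == x4]eq_sym (adj_neq e41).
(* The diagonals give a 2K2 on private neighbours; an edge between the two
   would leave the opposite side of the 4-cycle uncovered. *)
have p13 := pn_adj_of_nadj N1 N3 d13 n13; have p24 := pn_adj_of_nadj N2 N4 d24 n24.
apply: (no_induced_2K2 p13 p24).
- apply: contraTN e34 => /(vertex_cover_pn_adj N1 N2) cover.
  by apply: (vertex_cover2_nadj cover) => //; rewrite -(rot_uniq 2).
- rewrite e_sym; apply: contraTN e23 => /(vertex_cover_pn_adj N4 N1) cover.
  by apply: (vertex_cover2_nadj cover) => //; rewrite -(rot_uniq 3).
- rewrite e_sym; apply: contraTN e41 => /(vertex_cover_pn_adj N2 N3) cover.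
  by apply: (vertex_cover2_nadj cover) => //; rewrite -(rot_uniq 1).
- apply: contraTN e12 => /(vertex_cover_pn_adj N3 N4) cover.
  exact: vertex_cover2_nadj cover U X1 X2.
Qed.

Hypothesis X_big : alpha e < #|X|.

Lemma exists_pair_vertex_cover (B : {set T}) :
  {subset B <= nonisolated} -> vertex_cover B ->
  exists u v, [/\ u \in B, v \in B, u != v & vertex_cover [set u; v]].
Proof.
move=> B_ni B_cover.
have [/exists_inP[u uB /exists_inP[v vB /andP[uv epp]]] | none] :=
  boolP [exists u in B, exists v in B, (u != v) && e (pn u) (pn v)].
  by exists u, v; split=> //; apply: (vertex_cover_pn_adj _ _ epp); apply: B_ni.
move: X_big; rewrite ltnNge => /negP[]; apply: card_le_alpha B_ni B_cover _.
move=> u v uB vB uv; apply: contraNN none => epp.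
by apply/exists_inP; exists u => //; apply/exists_inP; exists v; rewrite ?uv.
Qed.

Lemma no_single_vertex_cover x : nonisolated x -> ~ vertex_cover [set x].
Proof.
move=> xN x_cover.
have x_ni : {subset [set x] <= nonisolated} by move=> u /set1P->.
have [u [v [/set1P-> /set1P-> + _]]] := exists_pair_vertex_cover x_ni x_cover.
by rewrite eqxx.
Qed.

Lemma clique_card_le3 (K : {set T}) :
  K \subset X -> {in K &, forall c d, c != d -> e c d} -> #|K| <= 3.
Proof.
move=> KX K_clique.
have [u [v [_ _ _ cover]]] : exists u v, [/\ u \in [set x | nonisolated x],
    v \in [set x | nonisolated x], u != v & vertex_cover [set u; v]].
  apply: exists_pair_vertex_cover => [x | c d cX dX ecd]; first by rewrite inE.
  by rewrite inE (nonisolatedW cX dX ecd).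
have outside_le1 : #|K :\: [set u; v]| <= 1.
  apply/card_le1_eqP=> c d /setDP[cK cuv] /setDP[dK duv]; apply/eqP.
  apply: contraNT cuv => dc; have := cover d c _ _ (K_clique d c dK cK dc).
  by rewrite (negbTE duv); apply; apply: (subsetP KX).
rewrite -(cardsID [set u; v] K) -[3]/(2 + 1) leq_add //.
by apply: leq_trans (subset_leq_card (subsetIr _ _)) _; rewrite cards2 ltnS leq_b1.
Qed.

Definition edge_nbhd a b :=
  X :&: [set v | (v != a) && (v != b) && (e v a || e v b)].

Lemma mem_edge_nbhd a b v :
  (v \in edge_nbhd a b) = [&& v \in X, v != a, v != b & e v a || e v b].
Proof. by rewrite !inE -!andbA. Qed.

Lemma edge_nbhdC a b : edge_nbhd b a = edge_nbhd a b.
Proof. by apply/setP=> v; rewrite !mem_edge_nbhd orbC [(v != b) && _]andbCA. Qed.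

Section Edge.

Variables a b : T.
Hypotheses (eab : e a b) (aX : a \in X) (bX : b \in X).

Local Notation Y := (edge_nbhd a b).

Lemma edge_nbhd_nonisolated y : y \in Y -> nonisolated y.
Proof.
by rewrite mem_edge_nbhd => /and4P[yX _ _ /orP[]]; apply: nonisolatedW.
Qed.

Lemma edge_nbhd_uniq y z : y \in Y -> z \in Y -> y != z -> uniq [:: a; b; y; z].
Proof.
rewrite !mem_edge_nbhd => /and4P[_ ya yb _] /and4P[_ za zb _] yz.
by rewrite /= !inE !negb_or adj_neq // ![a == _]eq_sym ![b == _]eq_sym ya yb za zb yz.
Qed.

Lemma nonisolated_mem_edge_nbhd r :
  nonisolated r -> r != a -> r != b -> r \in Y.
Proof.
move=> rN ra rb; have rX := (andP rN).1.
rewrite mem_edge_nbhd rX ra rb /=; apply/negPn/negP; rewrite negb_or.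
case/andP=> nra nrb; apply: (no_induced_2K2 eab (pn_adj rN)).
- by rewrite e_sym.
- by apply: pn_nadj; rewrite // eq_sym.
- by rewrite e_sym.
- by apply: pn_nadj; rewrite // eq_sym.
Qed.

Lemma edge_nbhd_clique y z : y \in Y -> z \in Y -> y != z -> e y z.
Proof.
move=> yY zY yz; apply/negPn/negP=> nyz.
have yN := edge_nbhd_nonisolated yY; have zN := edge_nbhd_nonisolated zY.
have cover := vertex_cover_nadj yN zN yz nyz.
by move: eab; apply/negP; apply: vertex_cover2_nadj cover (edge_nbhd_uniq yY zY yz) aX bX.
Qed.

Lemma edge_nbhd_pair_adj y z : y \in Y -> z \in Y -> y != z -> e y a.
Proof.
move=> yY zY yz; apply/negPn/negP=> nya.
move: (yY) (zY); rewrite !mem_edge_nbhd (negbTE nya) /=.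
case/and4P=> yX ya _ eyb /and4P[zX za zb ezab].
(* {y, a} covers the edges inside X, so the edge bz is impossible. *)
have nzb : ~~ e z b.
  have aN := nonisolatedW aX bX eab.
  have cover := vertex_cover_nadj (edge_nbhd_nonisolated yY) aN ya nya.
  rewrite e_sym; apply: vertex_cover2_nadj cover _ bX zX.
  by rewrite -(rot_uniq 3); apply: edge_nbhd_uniq zY yY _; rewrite eq_sym.
have eza : e z a by move: ezab; rewrite (negbTE nzb) orbF.
apply: (no_induced_C4 aX bX yX zX eab _ (edge_nbhd_clique yY zY yz) eza) => //.
all: by rewrite ?(e_sym a) ?(e_sym b) // eq_sym.
Qed.

Lemma exists_edge_nbhd_adj : #|Y| <= 1 -> exists2 y, y \in Y & e y a.
Proof.
move=> Y_le1.
have [/exists_inP // | /exists_inPn no_adj] := boolP [exists y in Y, e y a].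
have bN : nonisolated b by apply: nonisolatedW bX aX _; rewrite e_sym.
(* Otherwise b alone covers every edge of X: *)
case: (no_single_vertex_cover bN) => c d cX dX ecd; rewrite !inE.
apply/negPn/negP; rewrite negb_or => /andP[cb db].
have nbr_a v w : v \in X -> w \in X -> e v w -> v = a -> w != b -> False.
  move=> vX wX evw va wb; subst v.
  have wY : w \in Y by rewrite mem_edge_nbhd wX wb e_sym evw eq_sym adj_neq.
  by move: (no_adj w wY); rewrite e_sym evw.
have [ca | ca] := eqVneq c a; first exact: nbr_a cX dX ecd ca db.
have [da | da] := eqVneq d a; first by apply: nbr_a dX cX _ da cb; rewrite e_sym.
have cY := nonisolated_mem_edge_nbhd (nonisolatedW cX dX ecd) ca cb.
have dY := nonisolated_mem_edge_nbhd (nonisolatedW dX cX _) da db.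
by move: (adj_neq ecd); rewrite (card_le1_eqP Y_le1 c d cY (dY _)) ?eqxx // e_sym.
Qed.

End Edge.

Lemma card_edge_nbhd_le1 a b :
  e a b -> a \in X -> b \in X -> #|edge_nbhd a b| <= 1.
Proof.
move=> eab aX bX; apply/card_le1_eqP=> y z yY zY; apply/eqP.
apply/negPn/negP=> zy; have yz : y != z by rewrite eq_sym.
have eba : e b a by rewrite e_sym.
have bY w : w \in edge_nbhd a b -> w \in edge_nbhd b a by rewrite edge_nbhdC.
have U := edge_nbhd_uniq eab yY zY yz.
have eya := edge_nbhd_pair_adj eab aX bX yY zY yz.
have eza := edge_nbhd_pair_adj eab aX bX zY yY zy.
have eyb := edge_nbhd_pair_adj eba bX aX (bY _ yY) (bY _ zY) yz.
have ezb := edge_nbhd_pair_adj eba bX aX (bY _ zY) (bY _ yY) zy.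
have eyz := edge_nbhd_clique eab aX bX yY zY yz.
(* a, b, y, z would form a 4-clique inside X. *)
suff : size [:: a; b; y; z] <= 3 by [].
rewrite -(card_uniqP U) -cardsE; apply: clique_card_le3.
- apply/subsetP=> c; rewrite !inE => /or4P[]/eqP-> //.
  + by case/setIP: yY.
  + by case/setIP: zY.
- move=> c d; rewrite !inE => /or4P[]/eqP-> /or4P[]/eqP->; rewrite ?eqxx // => _.
  all: by rewrite // e_sym.
Qed.

Lemma edge_nbhd_adj a b y :
  e a b -> a \in X -> b \in X -> y \in edge_nbhd a b -> e y a.
Proof.
move=> eab aX bX yY; have Y_le1 := card_edge_nbhd_le1 eab aX bX.
have [z zY eza] := exists_edge_nbhd_adj eab aX bX Y_le1.
by rewrite -(card_le1_eqP Y_le1 y z yY zY).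
Qed.

End MinimalDominatingSet.

Theorem lemma5p2 (T : finType) (e : rel T) (a b : T) (X : {set T}) :
  simple_graph e -> twoK2_free e -> e a b ->
  minimal_dominating e X -> a \in X -> b \in X -> alpha e < #|X| ->
  let N := [set v | (v != a) && (v != b) && (e v a || e v b)] in
  let Y := X :&: N in
  #|Y| = 1 /\ (forall y, y \in Y -> e y a /\ e y b).
Proof.
move=> [e_sym e_irr] e_free eab X_mindom aX bX X_big N Y.
have eba : e b a by rewrite e_sym.
have Y_le1 : #|Y| <= 1 by apply: card_edge_nbhd_le1.
have [y yY _] : exists2 y, y \in Y & e y a by apply: exists_edge_nbhd_adj.
split.
- by apply/eqP; rewrite eqn_leq Y_le1; apply/card_gt0P; exists y.
- move=> z zY; split; first by apply: edge_nbhd_adj zY.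
  by apply: (edge_nbhd_adj _ _ X_mindom _ _ eba); rewrite // edge_nbhdC.
Qed.
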